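(* Let $\mathcal M_1=(X_1,\mathcal N_1,V_1)$ and $\mathcal M_2=(X_2,\mathcal N_2,V_2)$ be quasi-discrete neighbourhood models. (1) If $(Z_{\mathcal N},Z_1,Z_2)$ is a path preserving bisimulation between $\mathcal M_1$ and $\mathcal M_2$, then $Z_{\mathcal N}$ is a modal bisimulation with converse. (2) If $\rho\subseteq X_1\times X_2$ is a non-empty modal bisimulation with converse, then there exist relations $Z_1,Z_2$ such that $(\rho,Z_1,Z_2)$ is a path preserving bisimulation between $\mathcal M_1$ and $\mathcal M_2$.
   Context: A neighbourhood space $(X,\mathcal N)$ assigns to each $x\in X$ a filter $\mathcal N(x)$ on $X$ (closed under finite intersections and supersets, not containing $\emptyset$) such that $x\in N$ for all $N\in\mathcal N(x)$. It is quasi-discrete if each $x$ has a minimal neighbourhood $N_{\min}(x)\in\mathcal N(x)$ contained in every element of $\mathcal N(x)$. A quasi-discrete neighbourhood model $(X,\mathcal N,V)$ has a quasi-discrete space, index space $\mathbb N$ with usual order, least element $0$ and $N_{\min}(n)=\{n,n+1\}$, and a valuation $V:X\to\mathcal P(\mathsf P)$ for a countable set $\mathsf P$ of atoms. A path is a continuous map $p:\mathbb N\to X$, equivalently $p(n+1)\in N_{\min}(p(n))$ for all $n$. Induced edge relation: $R=\{(x,y)\mid y\in N_{\min}(x)\}$. Modal bisimulation with converse: $\rho\subseteq X_1\times X_2$ such that for every pair $x_1\rho x_2$: $V_1(x_1)=V_2(x_2)$; if $(x_1,y_1)\in R_1$ then there is $y_2$ with $(x_2,y_2)\in R_2$ and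 $y_1\rho y_2$; if $(x_2,y_2)\in R_2$ then there is $y_1$ with $(x_1,y_1)\in R_1$ and $y_1\rho y_2$; if $(y_1,x_1)\in R_1$ then there is $y_2$ with $(y_2,x_2)\in R_2$ and $y_1\rho y_2$; if $(y_2,x_2)\in R_2$ then there is $y_1$ with $(y_1,x_1)\in R_1$ and $y_1\rho y_2$. Path preserving bisimulation: with path sets $\mathcal P_1,\mathcal P_2$ and index set $I=\mathbb N$, a triple $(Z_{\mathcal N},Z_1,Z_2)$, $\emptyset\ne Z_{\mathcal N}\subseteq X_1\times X_2$, $Z_1\subseteq(\mathcal P_1\times I)\times(\mathcal P_2\times I)$, $Z_2\subseteq(\mathcal P_2\times I)\times(\mathcal P_1\times I)$, such that: (1) at each pair $x_1Z_{\mathcal N}x_2$: $V_1(x_1)=V_2(x_2)$; for every $N_2\in\mathcal N_2(x_2)$ there is $N_1\in\mathcal N_1(x_1)$ with every $y_1\in N_1$ related to some $y_2\in N_2$; and for every $N_1\in\mathcal N_1(x_1)$ there is $N_2\in\mathcal N_2(x_2)$ with every $y_2\in N_2$ related to some $y_1\in N_1$; (2) if $x_1Z_{\mathcal N}x_2$, $p(0)=x_1$, $n\ne0$, there are $q$ with $q(0)=x_2$ and $m$ with $p(n)Z_{\mathcal N}q(m)$, $(p,n)Z_1(q,m)$; (3) if $x_1Z_{\mathcal N}x_2$, $p(n)=x_1$, $n\ne0$, there are $q,m$ with $q(m)=x_2$, $p(0)Z_{\mathcal N}q(0)$, $(p,n)Z_1(q,m)$; (4) if $(p,n)Z_1(q,m)$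 and $0<k_q<m$, there is $0<k_p<n$ with $p(k_p)Z_{\mathcal N}q(k_q)$; (5) if $x_1Z_{\mathcal N}x_2$, $q(0)=x_2$, $m\ne0$, there are $p$ with $p(0)=x_1$ and $n$ with $p(n)Z_{\mathcal N}q(m)$, $(q,m)Z_2(p,n)$; (6) if $x_1Z_{\mathcal N}x_2$, $q(m)=x_2$, $m\neq0$, there are $p,n$ with $p(n)=x_1$, $p(0)Z_{\mathcal N}q(0)$, $(q,m)Z_2(p,n)$; (7) if $(q,m)Z_2(p,n)$ and $0<k_p<n$, there is $0<k_q<m$ with $p(k_p)Z_{\mathcal N}q(k_q)$. *)

From mathcomp Require Import all_boot.
Set Implicit Arguments.
Unset Strict Implicit.
Unset Printing Implicit Defensive.

Record QDModel (P : countType) := {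
  carrier :> Type;
  nbh : carrier -> (carrier -> Prop) -> Prop;
  nbh_full : forall x, nbh x (fun _ => True);
  nbh_inter : forall x U W, nbh x U -> nbh x W -> nbh x (fun y => U y /\ W y);
  nbh_super : forall x U W, nbh x U -> (forall y, U y -> W y) -> nbh x W;
  nbh_nonempty : forall x U, nbh x U -> exists y, U y;
  nbh_point : forall x U, nbh x U -> U x;
  Nmin : carrier -> carrier -> Prop;
  Nmin_nbh : forall x, nbh x (Nmin x);
  Nmin_least : forall x U, nbh x U -> forall y, Nmin x y -> U y;
  val : carrier -> P -> Prop
}.

(* Index space N: neighbourhood filter of n generated by N_min(n) = {n, n+1}. *)
Definition idx_nbh (n : nat) (W : nat -> Prop) : Prop := W n /\ W n.+1.

Definition is_path (P : countType) (M : QDModel P) (p : nat -> M) : Prop :=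
  forall n U, nbh (p n) U -> exists W, idx_nbh n W /\ forall k, W k -> U (p k).

Definition edge (P : countType) (M : QDModel P) (x y : M) : Prop := Nmin x y.

Definition modal_bisim_conv (P : countType) (M1 M2 : QDModel P)
    (rho : M1 -> M2 -> Prop) : Prop :=
  forall x1 x2, rho x1 x2 ->
    (forall a, val x1 a <-> val x2 a) /\
    (forall y1, edge x1 y1 -> exists y2, edge x2 y2 /\ rho y1 y2) /\
    (forall y2, edge x2 y2 -> exists y1, edge x1 y1 /\ rho y1 y2) /\
    (forall y1, edge y1 x1 -> exists y2, edge y2 x2 /\ rho y1 y2) /\
    (forall y2, edge y2 x2 -> exists y1, edge y1 x1 /\ rho y1 y2).

(* Path preserving bisimulation (Z_N, Z1, Z2). Z1, Z2 relate (path, index) pairs;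
   they are required to relate paths only (Z1 ⊆ (P1 x I) x (P2 x I)). *)
Definition pp_bisim (P : countType) (M1 M2 : QDModel P)
    (Z : M1 -> M2 -> Prop)
    (Z1 : (nat -> M1) * nat -> (nat -> M2) * nat -> Prop)
    (Z2 : (nat -> M2) * nat -> (nat -> M1) * nat -> Prop) : Prop :=
  (exists x1 x2, Z x1 x2) /\
  (forall p n q m, Z1 (p, n) (q, m) -> is_path p /\ is_path q) /\
  (forall q m p n, Z2 (q, m) (p, n) -> is_path q /\ is_path p) /\
  (* (1) *)
  (forall x1 x2, Z x1 x2 ->
     (forall a, val x1 a <-> val x2 a) /\
     (forall N2, nbh x2 N2 -> exists N1, nbh x1 N1 /\
        forall y1, N1 y1 -> exists y2, N2 y2 /\ Z y1 y2) /\
     (forall N1, nbh x1 N1 -> exists N2, nbh x2 N2 /\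
        forall y2, N2 y2 -> exists y1, N1 y1 /\ Z y1 y2)) /\
  (* (2) *)
  (forall x1 x2 p n, Z x1 x2 -> is_path p -> p 0 = x1 -> n <> 0 ->
     exists q m, is_path q /\ q 0 = x2 /\ Z (p n) (q m) /\ Z1 (p, n) (q, m)) /\
  (* (3) *)
  (forall x1 x2 p n, Z x1 x2 -> is_path p -> p n = x1 -> n <> 0 ->
     exists q m, is_path q /\ q m = x2 /\ Z (p 0) (q 0) /\ Z1 (p, n) (q, m)) /\
  (* (4) *)
  (forall p n q m, Z1 (p, n) (q, m) -> forall kq, 0 < kq < m ->
     exists kp, 0 < kp < n /\ Z (p kp) (q kq)) /\
  (* (5) *)
  (forall x1 x2 q m, Z x1 x2 -> is_path q -> q 0 = x2 -> m <> 0 ->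
     exists p n, is_path p /\ p 0 = x1 /\ Z (p n) (q m) /\ Z2 (q, m) (p, n)) /\
  (* (6) *)
  (forall x1 x2 q m, Z x1 x2 -> is_path q -> q m = x2 -> m <> 0 ->
     exists p n, is_path p /\ p n = x1 /\ Z (p 0) (q 0) /\ Z2 (q, m) (p, n)) /\
  (* (7) *)
  (forall q m p n, Z2 (q, m) (p, n) -> forall kp, 0 < kp < n ->
     exists kq, 0 < kq < m /\ Z (p kp) (q kq)).

(* In a quasi-discrete model a neighbourhood condition at x is decided on the
   minimal neighbourhood N_min(x), and a path N -> X is continuous exactly when
   consecutive points are joined by an edge.  Everything is therefore phrased
   through the pointwise "zig" (successor) and "zag" (predecessor) clauses.

   (1) From a path preserving bisimulation: the neighbourhood clause of Z_N is
       equivalent to the zig clause for successors ([edge_zig_iff_nbh_zig]);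
       the zag clause comes from conditions (3)/(4) applied to the two-point
       path y, x, x, ... : its partner path must reach x2 in at most one step
       ([pp_zag]).  The converse clauses are the same lemmas for the converse
       relation, fed with conditions (1), (5)/(6)/(7).
   (2) From a modal bisimulation rho: take as Z1 (and Z2, for the converse) the
       relation "same length, both paths, rho-related pointwise up to that
       length".  Conditions (2)-(7) follow from lifting a path forwards from
       its start ([path_lift_forth]) or backwards from a point
       ([path_lift_back]) along rho. *)

From Stdlib Require Import ClassicalEpsilon.
From mathcomp Require Import all_boot.

Set Implicit Arguments.
Unset Strict Implicit.
Unset Printing Implicit Defensive.

Section PathBisimulation.
Variable P : countType.

Lemma edge_refl (M : QDModel P) (x : M) : edge x x.
Proof. exact: nbh_point (Nmin_nbh x). Qed.

Lemma pathP (M : QDModel P) (p : nat -> M) :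
  is_path p <-> forall n, edge (p n) (p n.+1).
Proof.
split=> [p_path n | p_edge n U nU].
- by have [W [[_ Wn1] WU]] := p_path n _ (Nmin_nbh (p n)); apply: WU.
- exists (fun k => k = n \/ k = n.+1); split; first by split; [left | right].
  move=> k [-> | ->]; first exact: nbh_point nU.
  exact: Nmin_least nU _ (p_edge n).
Qed.

Lemma edge_path (M : QDModel P) (y x : M) :
  edge y x -> is_path (fun n => if n is 0 then y else x).
Proof. by move=> yx; apply/pathP => -[|n] //=; apply: edge_refl. Qed.

Definition converse (A B : Type) (R : A -> B -> Prop) : B -> A -> Prop :=
  fun b a => R a b.

Definition zig_at (A B : QDModel P) (R : A -> B -> Prop) (x : A) (y : B) :=
  forall x', edge x x' -> exists y', edge y y' /\ R x' y'.

Definition zag_at (A B : QDModel P) (R : A -> B -> Prop) (x : A) (y : B) :=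
  forall x', edge x' x -> exists y', edge y' y /\ R x' y'.

(* On quasi-discrete spaces the neighbourhood back-and-forth clause at (x, y)
   is exactly the zig clause, since only minimal neighbourhoods matter. *)
Lemma edge_zig_iff_nbh_zig (A B : QDModel P) (R : A -> B -> Prop) x y :
  zig_at R x y <->
  (forall N2, nbh y N2 -> exists N1, nbh x N1 /\
     forall x', N1 x' -> exists y', N2 y' /\ R x' y').
Proof.
split=> [zig N2 yN2 | nbh_zig x' xx'].
- exists (Nmin x); split; first exact: Nmin_nbh.
  move=> x' /zig [y' [yy' Rxy']].
  by exists y'; split; first exact: Nmin_least yN2 _ yy'.
- have [N1 [xN1 N1R]] := nbh_zig _ (Nmin_nbh y).
  exact: N1R _ (Nmin_least xN1 xx').
Qed.

Section ZagFromPaths.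
Variables (A B : QDModel P) (Z : A -> B -> Prop).
Variable Zp : (nat -> A) * nat -> (nat -> B) * nat -> Prop.

(* Conditions (3) and (4) of a path preserving bisimulation (or (6) and (7)
   for the converse) yield the zag clause: the partner of the two-point path
   ending at x must reach y within one step, as it has no interior point. *)
Lemma pp_zag :
  (forall x y p n, Z x y -> is_path p -> p n = x -> n <> 0 ->
     exists q m, is_path q /\ q m = y /\ Z (p 0) (q 0) /\ Zp (p, n) (q, m)) ->
  (forall p n q m, Zp (p, n) (q, m) -> forall k, 0 < k < m ->
     exists k', 0 < k' < n /\ Z (p k') (q k)) ->
  forall x y, Z x y -> zag_at Z x y.
Proof.
move=> back interior x y Zxy x' x'x.
have one_nz : 1 <> 0 by [].
have [q [m [q_path [qm [Zx'q0 Zpq]]]]] :=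
  back _ _ _ 1 Zxy (edge_path x'x) erefl one_nz.
exists (q 0); split=> //; move/pathP: q_path => q_edge.
case: m qm Zpq => [|[|m]] qm Zpq.
- by rewrite qm; apply: edge_refl.
- by rewrite -qm; apply: q_edge.
- by have [[|k'] [] //] := interior _ _ _ _ Zpq 1 erefl.
Qed.

End ZagFromPaths.

Lemma pp_bisim_modal (M1 M2 : QDModel P) (Z : M1 -> M2 -> Prop) Z1 Z2 :
  pp_bisim Z Z1 Z2 -> modal_bisim_conv Z.
Proof.
move=> [_ [_ [_ [nbh_cond [_ [back1 [interior1 [_ [back2 interior2]]]]]]]]].
have zag1 := pp_zag back1 interior1.
have zag2 := pp_zag (Z := converse Z) (fun x2 x1 => back2 x1 x2) interior2.
move=> x1 x2 Zx; have [val_eq [nbh_zig nbh_zig_conv]] := nbh_cond _ _ Zx.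
split; first exact: val_eq.
split; first exact/edge_zig_iff_nbh_zig.
split; first exact/(edge_zig_iff_nbh_zig (converse Z)).
by split; [apply: zag1 | apply: zag2].
Qed.

Section PathLifting.
Variables (A B : QDModel P) (R : A -> B -> Prop).

Lemma path_lift_forth (p : nat -> A) (y : B) :
  (forall a b, R a b -> zig_at R a b) -> is_path p -> R (p 0) y ->
  exists q, is_path q /\ q 0 = y /\ forall k, R (p k) (q k).
Proof.
move=> zig /pathP p_edge Ry.
pose step k (b : {b : B | R (p k) b}) :
    {b' : B | edge (sval b) b' /\ R (p k.+1) b'} :=
  constructive_indefinite_description _ (zig _ _ (svalP b) _ (p_edge k)).
pose lift := fix lift k : {b : B | R (p k) b} :=
  match k with
  | 0 => exist _ y Ry
  | k'.+1 => exist _ (sval (step k' (lift k'))) (svalP (step k' (lift k'))).2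
  end.
exists (fun k => sval (lift k)); split; last by split=> // k; apply: svalP.
by apply/pathP => k; apply: (svalP (step k (lift k))).1.
Qed.

Lemma path_lift_back (p : nat -> A) (n : nat) (y : B) :
  (forall a b, R a b -> zag_at R a b) -> is_path p -> R (p n) y ->
  exists q, is_path q /\ q n = y /\ forall k, k <= n -> R (p k) (q k).
Proof.
move=> zag /pathP p_edge; elim: n y => [|n IH] y Ry.
  exists (fun _ => y); split; first by apply/pathP => k; apply: edge_refl.
  by split=> // -[|k].
have [y' [y'y Ry']] := zag _ _ Ry _ (p_edge n).
have [q [/pathP q_edge [qn Rq]]] := IH _ Ry'.
exists (fun k => if k <= n then q k else y); split; last split.
- apply/pathP => k; case: (ltngtP k n) => [kn | nk | ->] /=.
  + by apply: q_edge.
  + by apply: edge_refl.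
  + by rewrite qn.
- by rewrite ltnn.
- move=> k; rewrite leq_eqVlt => /predU1P [-> | kn]; first by rewrite ltnn.
  by rewrite -ltnS kn; apply: Rq.
Qed.

Definition prefix_related (pn : (nat -> A) * nat) (qm : (nat -> B) * nat) :=
  is_path pn.1 /\ is_path qm.1 /\ qm.2 = pn.2 /\
  forall k, k <= pn.2 -> R (pn.1 k) (qm.1 k).

Lemma prefix_related_forth x y p n :
  (forall a b, R a b -> zig_at R a b) -> R x y -> is_path p -> p 0 = x ->
  exists q m, is_path q /\ q 0 = y /\ R (p n) (q m) /\
              prefix_related (p, n) (q, m).
Proof.
move=> zig Rxy p_path p0; rewrite -p0 in Rxy.
have [q [q_path [q0 Rpq]]] := path_lift_forth zig p_path Rxy.
by exists q, n.
Qed.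

Lemma prefix_related_back x y p n :
  (forall a b, R a b -> zag_at R a b) -> R x y -> is_path p -> p n = x ->
  exists q m, is_path q /\ q m = y /\ R (p 0) (q 0) /\
              prefix_related (p, n) (q, m).
Proof.
move=> zag Rxy p_path pn; rewrite -pn in Rxy.
have [q [q_path [qn Rpq]]] := path_lift_back zag p_path Rxy.
by exists q, n; do !split=> //; apply: Rpq.
Qed.

Lemma prefix_related_interior p n q m :
  prefix_related (p, n) (q, m) -> forall k, 0 < k < m ->
  exists k', 0 < k' < n /\ R (p k') (q k).
Proof.
move=> [_ [_ /= [-> Rpq]]] k /andP [k_pos kn].
by exists k; split; [apply/andP | apply: Rpq; apply: ltnW].
Qed.

End PathLifting.

Lemma modal_pp_bisim (M1 M2 : QDModel P) (rho : M1 -> M2 -> Prop) :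
  (exists x1 x2, rho x1 x2) -> modal_bisim_conv rho ->
  pp_bisim rho (prefix_related rho) (prefix_related (converse rho)).
Proof.
move=> nonempty bisim.
have zig1 : forall a b, rho a b -> zig_at rho a b by move=> a b /bisim [_ []].
have zig2 : forall b a, converse rho b a -> zig_at (converse rho) b a.
  by move=> b a /bisim [_ [_ []]].
have zag1 : forall a b, rho a b -> zag_at rho a b.
  by move=> a b /bisim [_ [_ [_ []]]].
have zag2 : forall b a, converse rho b a -> zag_at (converse rho) b a.
  by move=> b a /bisim [_ [_ [_ [_]]]].
split=> //; split; first by move=> ???? [? []].
split; first by move=> ???? [? []].
split.
  move=> x1 x2 Zx; split; first by case: (bisim _ _ Zx).
  by split; apply/edge_zig_iff_nbh_zig; [apply: zig1 | apply: zig2].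
split; first by move=> ?? p n Zx p_path p0 _;
  exact: (prefix_related_forth n zig1 Zx p_path p0).
split; first by move=> ?? p n Zx p_path pn _;
  exact: (prefix_related_back zag1 Zx p_path pn).
split; first exact: prefix_related_interior.
split; first by move=> ?? q m Zx q_path q0 _;
  exact: (prefix_related_forth m zig2 Zx q_path q0).
split; first by move=> ?? q m Zx q_path qm _;
  exact: (prefix_related_back zag2 Zx q_path qm).
exact: prefix_related_interior.
Qed.

End PathBisimulation.

Theorem lemma28 (P : countType) (M1 M2 : QDModel P) :
  (forall (Z : M1 -> M2 -> Prop) Z1 Z2,
     pp_bisim Z Z1 Z2 -> modal_bisim_conv Z) /\
  (forall rho : M1 -> M2 -> Prop,
     (exists x1 x2, rho x1 x2) -> modal_bisim_conv rho ->
     exists Z1 Z2, pp_bisim rho Z1 Z2).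
Proof.
split; first exact: pp_bisim_modal.
move=> rho nonempty bisim.
by exists (prefix_related rho), (prefix_related (converse rho));
  apply: modal_pp_bisim.
Qed.
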